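(* Let $\mathbf{T}\in\mathbb{R}^{n\ell\times n\ell}$ be symmetric positive definite and suppose $\mathbf{T}=\mathbf{I}_\ell\otimes\mathbf{T}_0+\sum_{k=1}^p\mathbf{E}_k\otimes\mathbf{T}_k$ with $\mathbf{T}_0\in\mathbb{R}^{n\times n}$ symmetric positive definite, $\mathbf{T}_k\in\mathbb{R}^{n\times n}$, and $\mathbf{E}_k\in\mathbb{R}^{\ell\times\ell}$ as in the context. Let $\mathbf{T}_0=\mathbf{L}\mathbf{L}^\top$ be its Cholesky factorization, set $\mathbf{A}_k=\mathbf{L}^{-1}\mathbf{T}_k\mathbf{L}^{-\top}$ and $\mathbf{A}=\sum_{k=1}^p\mathbf{E}_k\otimes\mathbf{A}_k$. Let $\mathcal{X}\in\mathbb{R}^{n\times p\times n}$ be the tensor with $\mathcal{X}_{i,k,j}=(\mathbf{A}_k)_{ij}$, let $\mathbf{U}\in\mathbb{R}^{n\times r}$ have orthonormal columns, and define $\mathcal{G}=\mathcal{X}\times_1\mathbf{U}^\top\times_3\mathbf{U}^\top$ and $\mathcal{T}=\mathcal{G}\times_1\mathbf{U}\times_3\mathbf{U}$. Then the matrix \[\widehat{\mathbf{T}}=(\mathbf{I}_\ell\otimes\mathbf{L})\big(\mathbf{I}+\mathcal{M}_{\mathcal{E}}[\mathcal{T}]\big)(\mathbf{I}_\ell\otimes\mathbf{L}^\top)\] is symmetric positive definite.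
   Context: The matrices $\mathbf{E}_1,\dots,\mathbf{E}_p\in\mathbb{R}^{\ell\times\ell}$ are position matrices: $\mathbf{E}_k$ has entries in $\{0,1/\sqrt{\eta_k}\}$ where $\eta_k\ge1$ is the number of its nonzero entries, and the supports of distinct $\mathbf{E}_k$ are disjoint. For a tensor $\mathcal{Y}\in\mathbb{R}^{n\times p\times n}$, $\mathrm{sq}(\mathcal{Y}_{:,k,:})$ is the $n\times n$ matrix with entries $\mathcal{Y}_{i,k,j}$ and $\mathcal{M}_{\mathcal{E}}[\mathcal{Y}]=\sum_{k=1}^p\mathbf{E}_k\otimes\mathrm{sq}(\mathcal{Y}_{:,k,:})$. The mode-$i$ product $\mathcal{Y}\times_i\mathbf{M}$ multiplies every mode-$i$ fiber of $\mathcal{Y}$ by $\mathbf{M}$, i.e. $(\mathcal{Y}\times_1\mathbf{M})_{a,k,j}=\sum_i\mathbf{M}_{ai}\mathcal{Y}_{i,k,j}$ and $(\mathcal{Y}\times_3\mathbf{M})_{i,k,b}=\sum_j\mathbf{M}_{bj}\mathcal{Y}_{i,k,j}$. The Kronecker product $\mathbf{B}\otimes\mathbf{C}$ has $(i,j)$ block $b_{ij}\mathbf{C}$; $\mathbf{L}^{-\top}=(\mathbf{L}^{-1})^\top$. *)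

From HB Require Import structures.
From mathcomp Require Import all_boot all_order all_algebra.
From mathcomp Require Import reals.
From mathcomp Require Export mxtens.
Set Implicit Arguments. Unset Strict Implicit. Unset Printing Implicit Defensive.
Import Order.TTheory GRing.Theory Num.Theory.
Local Open Scope ring_scope.

(* Kronecker product: A *t B (mathcomp real_closed mxtens), block (i,j) = A i j * B. *)

Definition spd {R : realType} {N : nat} (M : 'M[R]_N) : Prop :=
  M^T = M /\ forall x : 'cV[R]_N, x != 0 -> 0 < (x^T *m M *m x) 0 0.

Definition position_matrices {R : realType} {l p : nat}
  (E : 'I_p -> 'M[R]_l) (eta : 'I_p -> nat) : Prop :=
  [/\ forall k, (1 <= eta k)%N,
      forall k, #|[set ab : 'I_l * 'I_l | E k ab.1 ab.2 != 0]| = eta k,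
      forall k a b, E k a b = 0 \/ E k a b = 1 / Num.sqrt ((eta k)%:R) &
      forall k k' a b, k != k' -> E k a b != 0 -> E k' a b = 0].

Definition cholesky {R : realType} {n : nat} (T0 L : 'M[R]_n) : Prop :=
  [/\ is_trig_mx L, forall i, 0 < L i i & T0 = L *m L^T].

Definition tensor3 (R : Type) (n p m : nat) := 'I_n -> 'I_p -> 'I_m -> R.

Definition mode1 {R : realType} {n p m a : nat}
  (Y : tensor3 R n p m) (M : 'M[R]_(a, n)) : tensor3 R a p m :=
  fun a0 k j => \sum_(i < n) M a0 i * Y i k j.

Definition mode3 {R : realType} {n p m b : nat}
  (Y : tensor3 R n p m) (M : 'M[R]_(b, m)) : tensor3 R n p b :=
  fun i k b0 => \sum_(j < m) M b0 j * Y i k j.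

Definition sq {R : realType} {n p m : nat} (Y : tensor3 R n p m) (k : 'I_p)
  : 'M[R]_(n, m) := \matrix_(i, j) Y i k j.

Definition ME {R : realType} {l n p : nat} (E : 'I_p -> 'M[R]_l)
  (Y : tensor3 R n p n) : 'M[R]_(l * n) :=
  \sum_(k < p) (E k *t sq Y k).

(* The congruence by the invertible matrix I ⊗ L turns T into I + A, so I + A
   is positive definite, and it also shows that the claim is equivalent to the
   positive definiteness of I + P A P, where P = I ⊗ U Uᵀ is the orthogonal
   projector onto the compressed subspace (indeed M_E[𝒯] = P A P).  For z ≠ 0,
   zᵀ (I + P A P) z = (|z|² - |P z|²) + (P z)ᵀ (I + A) (P z): the first term is
   nonnegative and the second positive unless P z = 0, in which case the first
   one is |z|² > 0. *)
From HB Require Import structures.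
From mathcomp Require Import all_boot all_order all_algebra.
From mathcomp Require Import reals mxtens.
From mathcomp Require Import lra.

Set Implicit Arguments.
Unset Strict Implicit.
Unset Printing Implicit Defensive.
Import Order.TTheory GRing.Theory Num.Theory.
Local Open Scope ring_scope.

Lemma tensmx11 (R : pzRingType) m n :
  (1%:M : 'M[R]_m) *t (1%:M : 'M[R]_n) = 1%:M.
Proof.
apply/matrixP => i j.
case: (mxtens_indexP i) => i1 i2; case: (mxtens_indexP j) => j1 j2.
rewrite tensmxE !mxE (inj_eq (can_inj (@mxtens_indexK m n))) xpair_eqE.
by rewrite -natrM mulnb.
Qed.

Lemma tensmx_unitmx (R : comUnitRingType) m n (A : 'M[R]_m) (B : 'M[R]_n) :
  A \in unitmx -> B \in unitmx -> A *t B \in unitmx.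
Proof.
move=> uA uB; suff /mulmx1_unit[] : (invmx A *t invmx B) *m (A *t B) = 1%:M by [].
by rewrite tensmx_mul !mulVmx // tensmx11.
Qed.

Lemma sum_tensmx_mul (R : comPzRingType) l n n' m m' p
    (E : 'I_p -> 'M[R]_l) (B : 'I_p -> 'M[R]_(n, n'))
    (M : 'M[R]_(m, n)) (N : 'M[R]_(n', m')) :
  \sum_(k < p) E k *t (M *m B k *m N)
  = (1%:M *t M) *m (\sum_(k < p) E k *t B k) *m (1%:M *t N).
Proof.
rewrite mulmx_sumr mulmx_suml; apply: eq_bigr => k _.
by rewrite !tensmx_mul mul1mx mulmx1.
Qed.

Section Tensor.
Variable R : realType.

Lemma sq_mode1 n p m a (Y : tensor3 R n p m) (M : 'M[R]_(a, n)) k :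
  sq (mode1 Y M) k = M *m sq Y k.
Proof. by apply/matrixP => i j; rewrite !mxE; apply: eq_bigr => t _; rewrite !mxE. Qed.

Lemma sq_mode3 n p m b (Y : tensor3 R n p m) (M : 'M[R]_(b, m)) k :
  sq (mode3 Y M) k = sq Y k *m M^T.
Proof.
by apply/matrixP => i j; rewrite !mxE; apply: eq_bigr => t _; rewrite !mxE mulrC.
Qed.

Lemma ME_mode13 l n m p (E : 'I_p -> 'M[R]_l) (Y : tensor3 R m p m)
    (M : 'M[R]_(n, m)) :
  ME E (mode3 (mode1 Y M) M) = (1%:M *t M) *m ME E Y *m (1%:M *t M^T).
Proof.
rewrite /ME -sum_tensmx_mul; apply: eq_bigr => k _.
by rewrite sq_mode3 sq_mode1.
Qed.

End Tensor.

Section QuadraticForm.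
Variable R : realType.

Definition qform {N} (M : 'M[R]_N) (x : 'cV[R]_N) : R := (x^T *m M *m x) 0 0.

Lemma qformD N (M M' : 'M[R]_N) x : qform (M + M') x = qform M x + qform M' x.
Proof. by rewrite /qform mulmxDr mulmxDl mxE. Qed.

Lemma qform0 N (M : 'M[R]_N) : qform M 0 = 0.
Proof. by rewrite /qform mulmx0 mxE. Qed.

Lemma qform_congr N m (K : 'M[R]_(N, m)) (M : 'M[R]_m) x :
  qform (K *m M *m K^T) x = qform M (K^T *m x).
Proof. by rewrite /qform trmx_mul trmxK !mulmxA. Qed.

Lemma qform1_mul N m (B : 'M[R]_(m, N)) x : qform 1%:M (B *m x) = qform (B^T *m B) x.
Proof. by rewrite /qform trmx_mul mulmx1 !mulmxA. Qed.

Lemma qform1E N (x : 'cV[R]_N) : qform 1%:M x = \sum_i x i 0 ^+ 2.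
Proof. by rewrite /qform mulmx1 mxE; apply: eq_bigr => i _; rewrite mxE expr2. Qed.

Lemma qform1_ge0 N (x : 'cV[R]_N) : 0 <= qform 1%:M x.
Proof. by rewrite qform1E sumr_ge0 // => i _; apply: sqr_ge0. Qed.

Lemma qform1_gt0 N (x : 'cV[R]_N) : x != 0 -> 0 < qform 1%:M x.
Proof.
move=> x_neq0; rewrite lt_neqAle qform1_ge0 andbT eq_sym qform1E.
apply: contra x_neq0 => /eqP/psumr_eq0P x2_eq0; apply/eqP/matrixP => i j.
rewrite [j]ord1 mxE; apply/eqP; rewrite -sqrf_eq0.
by rewrite x2_eq0 // => k _; apply: sqr_ge0.
Qed.

Lemma spdE N (M : 'M[R]_N) :
  spd M <-> M^T = M /\ forall x, x != 0 -> 0 < qform M x.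
Proof. by []. Qed.

Lemma spd_congr N (K M : 'M[R]_N) :
  K \in unitmx -> spd (K *m M *m K^T) <-> spd M.
Proof.
move=> uK; have uKT : K^T \in unitmx by rewrite unitmx_tr.
have trKMK (M' : 'M[R]_N) : (K *m M' *m K^T)^T = K *m M'^T *m K^T.
  by rewrite !trmx_mul trmxK mulmxA.
have congr_inj (M1 M2 : 'M[R]_N) : K *m M1 *m K^T = K *m M2 *m K^T -> M1 = M2.
  by move/(congr1 (fun M' => invmx K *m M' *m invmx K^T));
     rewrite !mulmxA !mulVmx // !mul1mx -!mulmxA !mulmxV // !mulmx1.
have KT_eq0 (x : 'cV[R]_N) : (K^T *m x == 0) = (x == 0).
  apply/eqP/eqP => [|->]; last by rewrite mulmx0.
  by move/(congr1 (mulmx (invmx K^T))); rewrite mulKmx // mulmx0.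
rewrite !spdE; split=> [[symKMK posKMK]|[symM posM]]; split.
- by apply: congr_inj; rewrite -trKMK symKMK.
- move=> y y_neq0; have := posKMK (invmx K^T *m y).
  by rewrite -KT_eq0 mulKVmx // y_neq0 qform_congr mulKVmx //; apply.
- by rewrite trKMK symM.
- by move=> x x_neq0; rewrite qform_congr posM // KT_eq0.
Qed.

Lemma qform1_proj_le N (P : 'M[R]_N) x :
  P^T = P -> P *m P = P -> qform 1%:M (P *m x) <= qform 1%:M x.
Proof.
move=> symP idemP.
have symQ : (1%:M - P)^T = 1%:M - P by rewrite raddfB /= trmx1 symP.
have idemQ : (1%:M - P) *m (1%:M - P) = 1%:M - P.
  by rewrite mulmxBl !mulmxBr !mul1mx !mulmx1 idemP subrr subr0.
have -> : qform 1%:M x = qform 1%:M (P *m x) + qform 1%:M ((1%:M - P) *m x).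
  by rewrite !qform1_mul symP symQ idemP idemQ -qformD addrC subrK.
by rewrite lerDl qform1_ge0.
Qed.

Lemma spd_add1_proj N (P M : 'M[R]_N) :
  P^T = P -> P *m P = P -> spd (1%:M + M) -> spd (1%:M + P *m M *m P).
Proof.
rewrite !spdE => symP idemP [sym1M pos1M].
have symM : M^T = M by apply: (@addrI _ 1%:M); rewrite -trmx1 -raddfD /= sym1M trmx1.
split=> [|z z_neq0]; first by rewrite raddfD /= trmx1 !trmx_mul symP symM mulmxA.
rewrite qformD.
have -> : qform (P *m M *m P) z = qform M (P *m z).
  by rewrite -[in RHS]symP -qform_congr symP.
have Pz_le := qform1_proj_le z symP idemP.
have [->|Pz_neq0] := eqVneq (P *m z) 0; first by rewrite qform0 addr0 qform1_gt0.
by have := pos1M _ Pz_neq0; rewrite qformD; lra.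
Qed.

End QuadraticForm.

Lemma cholesky_unitmx (R : realType) n (T0 L : 'M[R]_n) :
  cholesky T0 L -> L \in unitmx.
Proof.
case=> trigL diagL _; rewrite unitmxE det_trig // unitfE.
by apply/lt0r_neq0/prodr_gt0 => i _; apply: diagL.
Qed.

Theorem theorem5p2 (R : realType) (n l p r : nat)
  (E : 'I_p -> 'M[R]_l) (eta : 'I_p -> nat)
  (T : 'M[R]_(l * n)) (T0 : 'M[R]_n) (Tk : 'I_p -> 'M[R]_n)
  (L : 'M[R]_n) (U : 'M[R]_(n, r)) :
  position_matrices E eta ->
  spd T ->
  T = (1%:M : 'M[R]_l) *t T0 + \sum_(k < p) (E k *t Tk k) ->
  spd T0 ->
  cholesky T0 L ->
  U^T *m U = 1%:M ->
  let A_ := fun k => invmx L *m Tk k *m (invmx L)^T in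
  let X : tensor3 R n p n := fun i k j => A_ k i j in
  let G := mode3 (mode1 X U^T) U^T in
  let TT := mode3 (mode1 G U) U in
  spd (((1%:M : 'M[R]_l) *t L) *m (1%:M + ME E TT) *m ((1%:M : 'M[R]_l) *t L^T)).
Proof.
move=> _ spdT defT _ cholL UTU A_ X G TT.
have uL := cholesky_unitmx cholL.
have uK : (1%:M : 'M[R]_l) *t L \in unitmx by rewrite tensmx_unitmx ?unitmx1.
have trK : (1%:M : 'M[R]_l) *t L^T = (1%:M *t L)^T by rewrite trmx_tens trmx1.
have ME_X : ME E X = \sum_(k < p) E k *t A_ k.
  by apply: eq_bigr => k _; congr (_ *t _); apply/matrixP => i j; rewrite mxE.
have LAL k : L *m A_ k *m L^T = Tk k.
  by rewrite /A_ !mulmxA mulmxV // mul1mx -mulmxA -trmx_mul mulmxV // trmx1 mulmx1.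
have spd_1A : spd (1%:M + ME E X).
  rewrite -(spd_congr _ uK) mulmxDr mulmxDl mulmx1 -trK tensmx_mul mul1mx.
  rewrite ME_X -sum_tensmx_mul.
  under eq_bigr do rewrite LAL.
  by case: cholL => _ _ <-; rewrite -defT.
set P := (1%:M : 'M[R]_l) *t (U *m U^T).
have ME_TT : ME E TT = P *m ME E X *m P.
  rewrite !ME_mode13 trmxK /P -[in RHS](mul1mx (1%:M : 'M[R]_l)) -!tensmx_mul.
  by rewrite !mulmxA.
rewrite trK ME_TT spd_congr //; apply: spd_add1_proj => //.
- by rewrite /P trmx_tens trmx1 trmx_mul trmxK.
- by rewrite /P tensmx_mul mul1mx mulmxA -(mulmxA U) UTU mulmx1.
Qed.
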